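(* If the critical set $C_{\mathcal A,a}$ is nonempty, then it is a smooth $n$-dimensional subvariety of $U(\mathcal A)\subset\mathbb C^n\times\mathbb C^k$.
   Context: Let $0<k<n$, $J=\{1,\dots,n\}$. On $\mathbb C^k$ (coordinates $t_1,\dots,t_k$) fix nonzero linear functions $g_j=b^1_jt_1+\dots+b^k_jt_k$, $j\in J$, that span the dual space $(\mathbb C^k)^*$. On $\mathbb C^n\times\mathbb C^k$ (coordinates $z_1,\dots,z_n,t_1,\dots,t_k$) let $f_j=g_j+z_j$, $H_j=\{f_j=0\}$, and $U(\mathcal A)=\mathbb C^n\times\mathbb C^k\setminus\bigcup_jH_j$. Fix $a\in(\mathbb C^\times)^n$ and the (multivalued) master function $\Phi_{\mathcal A,a}=\sum_ja_j\log f_j$. The critical set is $C_{\mathcal A,a}=\{(x,u)\in U(\mathcal A):\partial\Phi_{\mathcal A,a}/\partial t_i(x,u)=0,\ i=1,\dots,k\}$, where $\partial\Phi_{\mathcal A,a}/\partial t_i=\sum_jb^i_ja_j/f_j$. *)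

From HB Require Import structures.
From mathcomp Require Import all_boot all_order all_algebra.
From mathcomp Require Import complex.
From mathcomp Require Import Rstruct.
From mathcomp Require Import mpoly.
Set Implicit Arguments. Unset Strict Implicit. Unset Printing Implicit Defensive.
Import GRing.Theory.
Local Open Scope ring_scope.

Definition Cx : numClosedFieldType := (Rdefinitions.R)[i].

(* Points of C^n x C^k are functions 'I_(n+k) -> Cx: coordinate [lshift k j]
   is z_j (j < n), coordinate [rshift n i] is t_i (i < k). *)
Definition zc n k (x : 'I_(n + k) -> Cx) (j : 'I_n) : Cx := x (lshift k j).
Definition tc n k (x : 'I_(n + k) -> Cx) (i : 'I_k) : Cx := x (rshift n i).

(* b : 'M_(k, n) with b i j = b^i_j, so g_j = \sum_i b i j t_i is column j. *)
Definition gA n k (b : 'M[Cx]_(k, n)) (x : 'I_(n + k) -> Cx) (j : 'I_n) : Cx :=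
  \sum_(i < k) b i j * tc x i.

Definition fA n k (b : 'M[Cx]_(k, n)) (x : 'I_(n + k) -> Cx) (j : 'I_n) : Cx :=
  gA b x j + zc x j.

Definition UA n k (b : 'M[Cx]_(k, n)) (x : 'I_(n + k) -> Cx) : Prop :=
  forall j : 'I_n, fA b x j != 0.

Definition dPhi_dt n k (b : 'M[Cx]_(k, n)) (a : 'I_n -> Cx)
    (x : 'I_(n + k) -> Cx) (i : 'I_k) : Cx :=
  \sum_(j < n) b i j * a j / fA b x j.

Definition critA n k (b : 'M[Cx]_(k, n)) (a : 'I_n -> Cx)
    (x : 'I_(n + k) -> Cx) : Prop :=
  UA b x /\ forall i : 'I_k, dPhi_dt b a x i = 0.

Definition jacobian N m (h : 'I_m -> {mpoly Cx[N]}) (p : 'I_N -> Cx)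
    : 'M[Cx]_(m, N) :=
  \matrix_(r < m, c < N) (mderiv c (h r)).@[p].

(* X is a smooth d-dimensional (closed algebraic) subvariety of the Zariski
   open set U of C^N:
   - X is contained in U and is Zariski closed in U (the common zero locus in
     U of finitely many polynomials);
   - near every point p of X (in a basic Zariski neighbourhood {g <> 0} of p
     intersected with U), X is the common zero set of N - d polynomials whose
     differentials at p are linearly independent (Jacobian of rank N - d). *)
Definition smooth_subvariety N (U X : ('I_N -> Cx) -> Prop) (d : nat) : Prop :=
  [/\ (forall x, X x -> U x),
      (exists F : seq {mpoly Cx[N]},
          forall x, X x <-> (U x /\ forall q, q \in F -> q.@[x] = 0)),
      (d <= N)%N &
      forall p, X p ->
        exists (g : {mpoly Cx[N]}) (h : 'I_(N - d) -> {mpoly Cx[N]}),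
          [/\ g.@[p] != 0,
              (forall x, U x -> g.@[x] != 0 ->
                 (X x <-> forall r, (h r).@[x] = 0)) &
              \rank (jacobian h p) = (N - d)%N]].

From HB Require Import structures.
From mathcomp Require Import all_boot all_order all_algebra.
From mathcomp Require Import complex Rstruct mpoly.
From mathcomp Require Import ring zify.
Import GRing.Theory.
Set Implicit Arguments. Unset Strict Implicit.
Local Open Scope ring_scope.

(* On U(A) the equations dPhi/dt_i = 0 are equivalent to the polynomial
   equations h_i = 0, where h_i = (prod_l f_l) * dPhi/dt_i
   = sum_j b^i_j a_j prod_{l <> j} f_l.  Only f_m depends on z_m, with
   df_m/dz_m = 1, so at a critical point the criticality equation itself gives
   dh_i/dz_m = -(prod_l f_l) a_m / f_m^2 * b^i_m.  Hence the z-block of the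
   Jacobian of (h_1, ..., h_k) is b times an invertible diagonal matrix and
   has rank rank b = k: the k equations cut out C_{A,a} transversally. *)

Section MDeriv.
Variables (R : comNzRingType) (N : nat).

Lemma mderivXU (i j : 'I_N) : ('X_j : {mpoly R[N]})^`M(i) = (j == i)%:R.
Proof.
rewrite mderivX mnm1E; case: (eqVneq j i) => [->|_]; last by rewrite scale0r.
by have := addmK U_(i) 0%MM; rewrite add0m => ->; rewrite mpolyX0 scale1r.
Qed.

Lemma mderiv_prod_eq0 (i : 'I_N) (I : Type) (r : seq I) (P : pred I)
    (F : I -> {mpoly R[N]}) :
  (forall l, P l -> (F l)^`M(i) = 0) -> (\prod_(l <- r | P l) F l)^`M(i) = 0.
Proof.
move=> F'0; apply: (big_ind (fun p => p^`M(i) = 0)) => //.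
- by rewrite -mpolyC1 mderivC.
- by move=> p q p'0 q'0; rewrite mderivM p'0 q'0 mul0r mulr0 addr0.
Qed.

End MDeriv.

Lemma rank_lsubmx_le (F : fieldType) m n1 n2 (A : 'M[F]_(m, n1 + n2)) :
  (\rank (lsubmx A) <= \rank A)%N.
Proof.
have -> : lsubmx A = A *m col_mx 1%:M 0.
  by rewrite -[A in RHS](hsubmxK A) mul_row_col mulmx1 mulmx0 addr0.
exact: mxrankM_maxl.
Qed.

Lemma rank_jacobian_reindex N m M (e : M = m) (h : 'I_m -> {mpoly Cx[N]}) p :
  \rank (jacobian (fun r => h (cast_ord e r)) p) = \rank (jacobian h p).
Proof.
by subst M; congr (\rank _); apply/matrixP => r c; rewrite !mxE cast_ord_id.
Qed.

Section CriticalEquations.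
Variables (n k : nat) (b : 'M[Cx]_(k, n)) (a : 'I_n -> Cx).

Definition fpoly (j : 'I_n) : {mpoly Cx[n + k]} :=
  \sum_(i < k) b i j *: 'X_(rshift n i) + 'X_(lshift k j).

Definition crit_poly (i : 'I_k) : {mpoly Cx[n + k]} :=
  \sum_(j < n) (b i j * a j) *: \prod_(l < n | l != j) fpoly l.

Lemma meval_fpoly x j : (fpoly j).@[x] = fA b x j.
Proof.
rewrite /fpoly mevalD mevalXU raddf_sum /=; congr (_ + _).
by apply: eq_bigr => i _; rewrite mevalZ mevalXU.
Qed.

Lemma meval_prod_fpoly x (P : pred 'I_n) :
  (\prod_(l < n | P l) fpoly l).@[x] = \prod_(l < n | P l) fA b x l.
Proof. by rewrite rmorph_prod /=; apply: eq_bigr => l _; rewrite meval_fpoly. Qed.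

Lemma meval_crit_poly x i : UA b x ->
  (crit_poly i).@[x] = (\prod_(l < n) fA b x l) * dPhi_dt b a x i.
Proof.
move=> xU; rewrite raddf_sum /= mulr_sumr; apply: eq_bigr => j _.
rewrite mevalZ meval_prod_fpoly [in RHS](bigD1 j) //=.
have := xU j; move: (fA b x j) (\prod_(l < n | l != j) fA b x l) => f Q f0.
by field.
Qed.

Lemma crit_poly_eq0 x i : UA b x ->
  (crit_poly i).@[x] = 0 <-> dPhi_dt b a x i = 0.
Proof.
move=> xU; rewrite meval_crit_poly //; split => [/eqP|->]; last by rewrite mulr0.
rewrite mulf_eq0 prodf_seq_eq0 => /orP[/hasP[l _ /= fl0]|/eqP //].
by have := xU l; rewrite fl0.
Qed.

Lemma critA_crit_poly x :
  critA b a x <-> UA b x /\ forall i, (crit_poly i).@[x] = 0.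
Proof.
split=> [[xU crit]|[xU h0]]; split=> // i; first exact/crit_poly_eq0.
exact/(crit_poly_eq0 _ xU).
Qed.

Lemma mderiv_fpoly_z (l m : 'I_n) : (fpoly l)^`M(lshift k m) = (l == m)%:R.
Proof.
rewrite /fpoly mderivD mderivXU raddf_sum /= (inj_eq (@lshift_inj _ _)).
rewrite big1 ?add0r // => i _; rewrite mderivZ mderivXU.
suff /negbTE -> : rshift n i != lshift k m by rewrite scaler0.
by apply/eqP => /(congr1 val) /=; have := ltn_ord m; lia.
Qed.

Lemma mderiv_prod_fpoly_z (j m : 'I_n) :
  (\prod_(l < n | l != j) fpoly l)^`M(lshift k m) =
  if j == m then 0 else \prod_(l < n | (l != j) && (l != m)) fpoly l.
Proof.
have fl'0 l : l != m -> (fpoly l)^`M(lshift k m) = 0.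
  by move=> /negbTE lm; rewrite mderiv_fpoly_z lm.
case: (eqVneq j m) => [->|jm]; first exact: mderiv_prod_eq0.
rewrite (bigD1 m) 1?eq_sym //= mderivM mderiv_fpoly_z eqxx mul1r.
by rewrite mderiv_prod_eq0 ?mulr0 ?addr0 // => l /andP[_ /fl'0].
Qed.

(* Only the terms j <> m survive differentiation, and the criticality
   equation at p turns their sum into - b^i_m a_m / f_m. *)
Lemma mderiv_crit_poly_z p i m : critA b a p ->
  ((crit_poly i)^`M(lshift k m)).@[p] =
  - (\prod_(l < n) fA b p l) * a m / fA b p m ^+ 2 * b i m.
Proof.
move=> [pU crit]; have := crit i; rewrite /dPhi_dt (bigD1 m) //= => /eqP.
rewrite addrC addr_eq0 => /eqP crit_m.
set P := \prod_(l < n) fA b p l.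
rewrite /crit_poly (big_morph _ (mderivD _) (mderiv0 _ _)) raddf_sum /=.
rewrite (eq_bigr (fun j => P / fA b p m *
    (if j != m then b i j * a j / fA b p j else 0))); last first.
  move=> j _; rewrite mderivZ mevalZ mderiv_prod_fpoly_z.
  case: (eqVneq j m) => [_|jm]; first by rewrite meval0 !mulr0.
  rewrite meval_prod_fpoly /P [in RHS](bigD1 j) //= [in RHS](bigD1 m) 1?eq_sym //=.
  have := pU j; have := pU m.
  move: (fA b p j) (fA b p m) (\prod_(l < n | _ && _) fA b p l) => fj fm Q fm0 fj0.
  by field; rewrite fj0 fm0.
rewrite -mulr_sumr -big_mkcond /= crit_m.
by have := pU m; move: (fA b p m) => fm fm0; field.
Qed.

Lemma rank_jacobian_crit_poly p : \rank b = k -> (forall j, a j != 0) ->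
  critA b a p -> \rank (jacobian crit_poly p) = k.
Proof.
move=> b_full a0 pcrit; have [pU _] := pcrit.
set P := \prod_(l < n) fA b p l.
set d := \row_(m < n) (- P * a m / fA b p m ^+ 2).
have zblock : lsubmx (jacobian crit_poly p) = b *m diag_mx d.
  by apply/matrixP => i m; rewrite mul_mx_diag !mxE mderiv_crit_poly_z // mulrC.
have d_free : row_free (diag_mx d).
  rewrite row_free_unit unitmxE det_diag unitfE; apply/prodf_neq0 => m _.
  have P0 : P != 0 by apply/prodf_neq0 => l _; exact: pU.
  by rewrite mxE !mulf_neq0 ?invr_neq0 ?expf_neq0 ?oppr_eq0.
apply/eqP; rewrite eqn_leq rank_leq_row -{1}b_full -(mxrankMfree b d_free) -zblock.
exact: rank_lsubmx_le.
Qed.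

End CriticalEquations.

Theorem lemma3p5 (n k : nat) (hk : (0 < k)%N) (hkn : (k < n)%N)
    (b : 'M[Cx]_(k, n))
    (hg0 : forall j : 'I_n, col j b != 0)      (* each g_j is nonzero *)
    (hspan : \rank b = k)                      (* the g_j span (C^k)^* *)
    (a : 'I_n -> Cx) (ha : forall j, a j != 0) (* a in (C^x)^n *)
    (hne : exists x, critA b a x) :            (* C_{A,a} nonempty *)
  smooth_subvariety (@UA n k b) (critA b a) n.
Proof.
have e : (n + k - n)%N = k by rewrite addKn.
split; first by move=> x [].
- exists [seq crit_poly b a i | i <- enum 'I_k] => x.
  rewrite critA_crit_poly; split=> -[xU h0]; split=> //.
  + by move=> q /mapP[i _ ->]; apply: h0.
  + by move=> i; apply: h0; apply/mapP; exists i; rewrite ?mem_enum.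
- exact: leq_addr.
move=> p pcrit; exists 1, (fun r => crit_poly b a (cast_ord e r)); split.
- by rewrite meval1 oner_neq0.
- move=> x xU _; rewrite critA_crit_poly; split=> [[_ h0] r //|h0].
  by split=> // i; have := h0 (cast_ord (esym e) i); rewrite cast_ordKV.
by rewrite rank_jacobian_reindex rank_jacobian_crit_poly // e.
Qed.
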